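(* Let $\mathcal K=(AP,W,R,L,w_I)$ be a Kripke structure and let $\mathcal U_{\mathcal K}=(AP,W^\bullet,R^\bullet,L^\bullet,\varepsilon)$ be its tree-like unwinding. Then the relation $\{(w^\bullet,\mathrm{pr}(w^\bullet)) : w^\bullet\in W^\bullet\}\subseteq W^\bullet\times W$ is a cycle-bisimulation relation between $\mathcal U_{\mathcal K}$ and $\mathcal K$. Hence $\mathcal K$ and $\mathcal U_{\mathcal K}$ satisfy exactly the same CTL*$_{cd}$ state formulas (i.e., $\mathcal K\models\varphi$ iff $\mathcal U_{\mathcal K}\models\varphi$).
   Context: A Kripke structure over a finite set $AP$ of atomic propositions is a tuple $\mathcal K=(AP,W,R,L,w_I)$ where $W$ is a countable non-empty set of worlds, $w_I\in W$ is the initial world, $R\subseteq W\times W$ is a left-total transition relation (every world has at least one $R$-successor), and $L:W\to 2^{AP}$ is a labelling function. A path is an infinite sequence $\pi=\pi_0\pi_1\cdots$ of worlds with $(\pi_i,\pi_{i+1})\in R$ for all $i\in\mathbb N$; $\mathrm{Pth}(w)$ is the set of paths with $\pi_0=w$. A path $\pi$ is a cycle if for every $i\in\mathbb N$ there is $j>i$ with $\pi_j=\pi_0$ (i.e. $\pi_0$ occurs infinitely often in $\pi$); $\mathrm{Cyc}(w)$ is the set of cycles with $\pi_0=w$. Syntax of CTL*$_{cd}$: state formulas $\varphi::=p\mid\neg\varphi\mid\varphi\wedge\varphi\mid\varphi\vee\varphi\mid \mathsf E\psi\mid\mathsf A\psi\mid\mathsf E^{c}\psi\mid\mathsf A^{c}\psi$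 with $p\in AP$; path formulas $\psi::=\varphi\mid\neg\psi\mid\psi\wedge\psi\mid\psi\vee\psi\mid\mathsf X\psi\mid\psi\,\mathsf U\,\psi$. Semantics: $\mathcal K,w\models p$ iff $p\in L(w)$; Boolean connectives as usual; $\mathcal K,w\models\mathsf E\psi$ iff some $\pi\in\mathrm{Pth}(w)$ has $\mathcal K,\pi,0\models\psi$; $\mathcal K,w\models\mathsf A\psi$ iff every $\pi\in\mathrm{Pth}(w)$ has $\mathcal K,\pi,0\models\psi$; $\mathcal K,w\models\mathsf E^{c}\psi$ iff some $\pi\in\mathrm{Cyc}(w)$ has $\mathcal K,\pi,0\models\psi$; $\mathcal K,w\models\mathsf A^{c}\psi$ iff every $\pi\in\mathrm{Cyc}(w)$ has $\mathcal K,\pi,0\models\psi$. For paths: $\mathcal K,\pi,i\models\varphi$ (state formula) iff $\mathcal K,\pi_i\models\varphi$; Boolean connectives as usual; $\mathcal K,\pi,i\models\mathsf X\psi$ iff $\mathcal K,\pi,i+1\models\psi$; $\mathcal K,\pi,i\models\psi_1\mathsf U\psi_2$ iff there is $k\ge0$ with $\mathcal K,\pi,i+k\models\psi_2$ and $\mathcal K,\pi,i+j\models\psi_1$ for all $0\le j<k$. $\mathcal K\models\varphi$ iff $\mathcal K,w_I\models\varphi$. Cycle-bisimulation: for Kripke structures $\mathcal K_1=(AP,W_1,R_1,L_1,w_{I,1})$, $\mathcal K_2=(AP,W_2,R_2,L_2,w_{I,2})$, a relation $B\subseteq W_1\times W_2$ is a cycle-bisimulation relation if $(w_{I,1},w_{I,2})\in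 B$ and for all $(w_1,w_2)\in B$: (a) $L_1(w_1)=L_2(w_2)$; (b) for every $v_1$ with $(w_1,v_1)\in R_1$ there is $v_2$ with $(w_2,v_2)\in R_2$ and $(v_1,v_2)\in B$; (c) for every $v_2$ with $(w_2,v_2)\in R_2$ there is $v_1$ with $(w_1,v_1)\in R_1$ and $(v_1,v_2)\in B$; (d) for every cycle $\pi_1$ of $\mathcal K_1$ with first world $w_1$ there is a cycle $\pi_2$ of $\mathcal K_2$ with first world $w_2$ such that $((\pi_1)_i,(\pi_2)_i)\in B$ for all $i$; (e) symmetrically, for every cycle $\pi_2$ of $\mathcal K_2$ with first world $w_2$ there is a cycle $\pi_1$ of $\mathcal K_1$ with first world $w_1$ such that $((\pi_1)_i,(\pi_2)_i)\in B$ for all $i$. Tree-like unwinding: let $\mathsf{new},\mathsf{cycle}$ be two fresh constants. The projection map $\mathrm{pr}:(W\times\{\mathsf{new},\mathsf{cycle}\})^*\to W$ is given by $\mathrm{pr}(\varepsilon)=w_I$ and $\mathrm{pr}(w^\bullet)=w$ if the last letter of $w^\bullet\neq\varepsilon$ is $(w,\alpha)$. A sequence $w^\bullet$ admits $u^\bullet$ as its initial cycle state if $w^\bullet=u^\bullet\,(v_1,\mathsf{new})(v_2,\mathsf{cycle})\cdots(v_k,\mathsf{cycle})$ for some $k\ge1$ and worlds $v_1,\dots,v_k\in W$ (i.e., $u^\bullet$ is the parent of the closest ancestor-or-self of $w^\bullet$ whose last letter carries $\mathsf{new}$; every $w^\bullet\neq\varepsilon$ has exactly one, $\varepsilon$ has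 none). Define a relation $R^\bullet$ on $(W\times\{\mathsf{new},\mathsf{cycle}\})^*$: for every $w^\bullet$ and every $v$ with $(\mathrm{pr}(w^\bullet),v)\in R$: $(w^\bullet,w^\bullet(v,\mathsf{new}))\in R^\bullet$ (a forward edge); if $w^\bullet$ has initial cycle state $u^\bullet$ with $\mathrm{pr}(u^\bullet)\neq v$, then $(w^\bullet,w^\bullet(v,\mathsf{cycle}))\in R^\bullet$ (a forward edge); if $w^\bullet$ has initial cycle state $u^\bullet$ with $\mathrm{pr}(u^\bullet)=v$, then $(w^\bullet,u^\bullet)\in R^\bullet$ (a back edge); no other pairs are in $R^\bullet$. The tree-like unwinding $\mathcal U_{\mathcal K}=(AP,W^\bullet,R^\bullet,L^\bullet,\varepsilon)$ has as worlds $W^\bullet$ the sequences reachable from $\varepsilon$ via $R^\bullet$, initial world $\varepsilon$, $R^\bullet$ restricted to $W^\bullet$, and $L^\bullet(w^\bullet)=L(\mathrm{pr}(w^\bullet))$. *)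

From mathcomp Require Import all_boot.
Set Implicit Arguments.
Unset Strict Implicit.
Unset Printing Implicit Defensive.

Record kripke (AP : finType) := Kripke {
  kW : Type;
  kR : kW -> kW -> Prop;
  kL : kW -> {set AP};
  kI : kW
}.

Definition left_total (AP : finType) (K : kripke AP) : Prop :=
  forall w : kW K, exists v, kR w v.

Definition countable_worlds (AP : finType) (K : kripke AP) : Prop :=
  exists f : kW K -> nat, injective f.

Definition is_path (AP : finType) (K : kripke AP) (pi : nat -> kW K) : Prop :=
  forall i, kR (pi i) (pi i.+1).

Definition is_cycle (AP : finType) (K : kripke AP) (pi : nat -> kW K) : Prop :=
  is_path pi /\ forall i, exists j, i < j /\ pi j = pi 0.

Inductive sform (AP : Type) : Type :=
  | SAtom : AP -> sform AP
  | SNot : sform AP -> sform AP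
  | SAnd : sform AP -> sform AP -> sform AP
  | SOr : sform AP -> sform AP -> sform AP
  | SE : pform AP -> sform AP
  | SA : pform AP -> sform AP
  | SEc : pform AP -> sform AP
  | SAc : pform AP -> sform AP
with pform (AP : Type) : Type :=
  | PState : sform AP -> pform AP
  | PNot : pform AP -> pform AP
  | PAnd : pform AP -> pform AP -> pform AP
  | POr : pform AP -> pform AP -> pform AP
  | PX : pform AP -> pform AP
  | PU : pform AP -> pform AP -> pform AP.

Fixpoint sat_s (AP : finType) (K : kripke AP) (w : kW K) (f : sform AP) {struct f} : Prop :=
  match f with
  | SAtom p => p \in kL w
  | SNot g => ~ sat_s w g
  | SAnd g h => sat_s w g /\ sat_s w h
  | SOr g h => sat_s w g \/ sat_s w h
  | SE q => exists pi, is_path pi /\ pi 0 = w /\ sat_p pi 0 q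
  | SA q => forall pi, is_path pi -> pi 0 = w -> sat_p pi 0 q
  | SEc q => exists pi, is_cycle pi /\ pi 0 = w /\ sat_p pi 0 q
  | SAc q => forall pi, is_cycle pi -> pi 0 = w -> sat_p pi 0 q
  end
with sat_p (AP : finType) (K : kripke AP) (pi : nat -> kW K) (i : nat) (q : pform AP)
  {struct q} : Prop :=
  match q with
  | PState g => sat_s (pi i) g
  | PNot r => ~ sat_p pi i r
  | PAnd r s => sat_p pi i r /\ sat_p pi i s
  | POr r s => sat_p pi i r \/ sat_p pi i s
  | PX r => sat_p pi i.+1 r
  | PU r s => exists k, sat_p pi (i + k) s /\ forall j, j < k -> sat_p pi (i + j) r
  end.

Definition models (AP : finType) (K : kripke AP) (f : sform AP) : Prop := sat_s (kI K) f.

Definition cycle_bisim (AP : finType) (K1 K2 : kripke AP)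
  (B : kW K1 -> kW K2 -> Prop) : Prop :=
  B (kI K1) (kI K2) /\
  forall w1 w2, B w1 w2 ->
    [/\ kL w1 = kL w2,
        (forall v1, kR w1 v1 -> exists v2, kR w2 v2 /\ B v1 v2),
        (forall v2, kR w2 v2 -> exists v1, kR w1 v1 /\ B v1 v2),
        (forall pi1 : nat -> kW K1, is_cycle pi1 -> pi1 0 = w1 ->
           exists pi2 : nat -> kW K2, is_cycle pi2 /\ pi2 0 = w2 /\
             forall i, B (pi1 i) (pi2 i)) &
        (forall pi2 : nat -> kW K2, is_cycle pi2 -> pi2 0 = w2 ->
           exists pi1 : nat -> kW K1, is_cycle pi1 /\ pi1 0 = w1 /\
             forall i, B (pi1 i) (pi2 i))].

Inductive flag := fnew | fcycle.

Section Unwinding.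
Variables (AP : finType) (K : kripke AP).

Definition useq := seq (kW K * flag).

Definition pr (s : useq) : kW K := (last (kI K, fnew) s).1.

Definition all_cycle (r : useq) : bool :=
  all (fun x => if x.2 is fcycle then true else false) r.

Definition init_cycle_state (s u : useq) : Prop :=
  exists v1 rest, s = u ++ (v1, fnew) :: rest /\ all_cycle rest.

Definition Rb (s t : useq) : Prop :=
  exists v, kR (pr s) v /\
    (t = rcons s (v, fnew) \/
     (exists u, init_cycle_state s u /\ pr u <> v /\ t = rcons s (v, fcycle)) \/
     (exists u, init_cycle_state s u /\ pr u = v /\ t = u)).

Inductive reach : useq -> Prop :=
  | reach_nil : reach [::]
  | reach_step s t : reach s -> Rb s t -> reach t.

Definition Wb : Type := {s : useq | reach s}.

Definition unwinding : kripke AP :=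
  @Kripke AP Wb (fun a b => Rb (proj1_sig a) (proj1_sig b))
    (fun a => kL (pr (proj1_sig a))) (exist _ [::] reach_nil).

End Unwinding.

(* A cycle-bisimulation relates worlds that agree on labels, paths and cycles
   step by step, so a mutual induction on state and path formulas shows that
   related worlds satisfy the same CTL*_cd formulas; paths are transported
   along the relation one edge at a time by choice.

   For the unwinding, the projection [pr] maps every edge of the unwinding to
   an edge of K: forward edges append a letter carrying their target, and a
   back edge returns to the initial cycle state, whose projection is the
   target.  Conversely, every K-edge out of [pr s] is matched by the forward
   edge [s -> s (v, new)].  A cycle of K through [pr s] is lifted to a cycle
   of the unwinding through [s]: open a branch with [(v1, new)], extend it by
   [cycle] letters, and take the back edge to [s] whenever the cycle returns
   to [pr s]. *)
From Stdlib Require Import ClassicalEpsilon ProofIrrelevance.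
From Pilot Require Import Defs.
From mathcomp Require Import all_boot.

Set Implicit Arguments.
Unset Strict Implicit.
Unset Printing Implicit Defensive.

Scheme sform_ind_mut := Induction for sform Sort Prop
  with pform_ind_mut := Induction for pform Sort Prop.
Combined Scheme sform_pform_ind from sform_ind_mut, pform_ind_mut.

Section PathTransfer.
Variables (AP : finType) (K1 K2 : kripke AP) (B : kW K1 -> kW K2 -> Prop).
Hypothesis forth : forall w1 w2, B w1 w2 ->
  forall v1, kR w1 v1 -> exists v2, kR w2 v2 /\ B v1 v2.
Variables (pi1 : nat -> kW K1) (w2 : kW K2).
Hypotheses (pi1_path : is_path pi1) (B_pi1_0 : B (pi1 0) w2).

Fixpoint transfer_step (n : nat) : {w | B (pi1 n) w} :=
  if n is m.+1 then
    let: exist w Bw := transfer_step m in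
    let: exist v Hv := constructive_indefinite_description _ (forth Bw (pi1_path m)) in
    exist _ v (proj2 Hv)
  else exist _ w2 B_pi1_0.

Lemma path_transfer :
  exists pi2 : nat -> kW K2, [/\ is_path pi2, pi2 0 = w2 & forall i, B (pi1 i) (pi2 i)].
Proof.
exists (fun n => proj1_sig (transfer_step n)); split => [n | // | n].
- rewrite /=; case: (transfer_step n) => w Bw /=.
  by case: constructive_indefinite_description => v [].
- exact: proj2_sig.
Qed.

End PathTransfer.

Section CycleBisimInvariance.
Variables (AP : finType) (K1 K2 : kripke AP) (B : kW K1 -> kW K2 -> Prop).
Hypothesis bisimB : cycle_bisim B.

Lemma cycle_bisim_sat :
  (forall (f : sform AP) w1 w2, B w1 w2 -> sat_s w1 f <-> sat_s w2 f) /\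
  (forall (q : pform AP) pi1 pi2, (forall i, B (pi1 i) (pi2 i)) ->
     forall i, sat_p pi1 i q <-> sat_p pi2 i q).
Proof.
have [_ bisim] := bisimB.
have forth w1 w2 : B w1 w2 -> forall v1, kR w1 v1 -> exists v2, kR w2 v2 /\ B v1 v2.
  by case/bisim.
have back w2 w1 : B w1 w2 -> forall v2, kR w2 v2 -> exists v1, kR w1 v1 /\ B v1 v2.
  by case/bisim.
apply: sform_pform_ind => /=.
- by move=> p w1 w2 /bisim[->].
- by move=> g IH w1 w2 /IH ->.
- by move=> g IHg h IHh w1 w2 Bw; rewrite (IHg _ _ Bw) (IHh _ _ Bw).
- by move=> g IHg h IHh w1 w2 Bw; rewrite (IHg _ _ Bw) (IHh _ _ Bw).
- move=> q IH w1 w2 Bw; split.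
  + case=> pi1 [p1 [e1 s1]].
    have /(path_transfer forth p1)[pi2 [p2 e2 B12]] : B (pi1 0) w2 by rewrite e1.
    by exists pi2; split => //; split => //; apply/(IH _ _ B12 0).
  + case=> pi2 [p2 [e2 s2]].
    have /(path_transfer (B := fun x y => B y x) back p2)[pi1 [p1 e1 B21]] : B w1 (pi2 0).
      by rewrite e2.
    by exists pi1; split => //; split => //; apply/(IH _ _ B21 0).
- move=> q IH w1 w2 Bw; split.
  + move=> H pi2 p2 e2.
    have /(path_transfer (B := fun x y => B y x) back p2)[pi1 [p1 e1 B21]] : B w1 (pi2 0).
      by rewrite e2.
    by apply/(IH _ _ B21 0); apply: H.
  + move=> H pi1 p1 e1.
    have /(path_transfer forth p1)[pi2 [p2 e2 B12]] : B (pi1 0) w2 by rewrite e1.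
    by apply/(IH _ _ B12 0); apply: H.
- move=> q IH w1 w2 /bisim[_ _ _ cyc12 cyc21]; split.
  + case=> pi1 [c1 [e1 s1]]; have [pi2 [c2 [e2 B12]]] := cyc12 _ c1 e1.
    by exists pi2; split => //; split => //; apply/(IH _ _ B12 0).
  + case=> pi2 [c2 [e2 s2]]; have [pi1 [c1 [e1 B21]]] := cyc21 _ c2 e2.
    by exists pi1; split => //; split => //; apply/(IH _ _ B21 0).
- move=> q IH w1 w2 /bisim[_ _ _ cyc12 cyc21]; split.
  + move=> H pi2 c2 e2; have [pi1 [c1 [e1 B21]]] := cyc21 _ c2 e2.
    by apply/(IH _ _ B21 0); apply: H.
  + move=> H pi1 c1 e1; have [pi2 [c2 [e2 B12]]] := cyc12 _ c1 e1.
    by apply/(IH _ _ B12 0); apply: H.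
- by move=> g IH pi1 pi2 B12 i; apply: IH.
- by move=> r IH pi1 pi2 B12 i; rewrite (IH _ _ B12).
- by move=> r IHr t IHt pi1 pi2 B12 i; rewrite (IHr _ _ B12) (IHt _ _ B12).
- by move=> r IHr t IHt pi1 pi2 B12 i; rewrite (IHr _ _ B12) (IHt _ _ B12).
- by move=> r IH pi1 pi2 B12 i; rewrite (IH _ _ B12).
- move=> r IHr t IHt pi1 pi2 B12 i.
  by split; case=> k [Ht Hr]; exists k; split => [|j /Hr];
    rewrite ?(IHt _ _ B12) ?(IHr _ _ B12) // -?(IHt _ _ B12) -?(IHr _ _ B12).
Qed.

Lemma cycle_bisim_models (phi : sform AP) : models K1 phi <-> models K2 phi.
Proof. exact: (proj1 cycle_bisim_sat) _ _ _ (proj1 bisimB). Qed.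

End CycleBisimInvariance.

Section Unwinding.
Variables (AP : finType) (K : kripke AP).

Lemma pr_rcons (s : useq K) x : pr (rcons s x) = x.1.
Proof. by rewrite /pr last_rcons. Qed.

Lemma unwinding_world_eq (a b : kW (unwinding K)) : proj1_sig a = proj1_sig b -> a = b.
Proof. by case: a b => s rs [t rt] /= est; subst t; rewrite (proof_irrelevance _ rs rt). Qed.

Lemma Rb_pr (s t : useq K) : Rb s t -> kR (pr s) (pr t).
Proof.
by case=> v [Rv [-> | [[u [_ [_ ->]]] | [u [_ [e ->]]]]]]; rewrite ?pr_rcons ?e.
Qed.

Lemma Rb_new (s : useq K) v : kR (pr s) v -> Rb s (rcons s (v, fnew)).
Proof. by exists v; split => //; left. Qed.

Lemma pr_is_cycle (pi : nat -> kW (unwinding K)) :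
  is_cycle pi -> is_cycle (fun n => pr (proj1_sig (pi n))).
Proof.
case=> p c; split=> [n | i]; first exact: Rb_pr (p n).
by have [j [ij e]] := c i; exists j; rewrite e.
Qed.

Lemma init_cycle_state_size (s u : useq K) : init_cycle_state s u -> size s != size u.
Proof. by case=> v [r [-> _]]; rewrite size_cat /= -{2}[size u]addn0 eqn_add2l. Qed.

Section CycleLift.
Variables (pi : nat -> kW K) (s : useq K).
Hypothesis pi0 : pi 0 = pr s.

(* [useq K] has no decidable equality, so [t = s] is tested by comparing
   sizes: every [lift_cycle n] is either [s] or strictly extends it. *)
Fixpoint lift_cycle (n : nat) : useq K :=
  if n is m.+1 then
    if size (lift_cycle m) == size s then rcons s (pi n, fnew)
    else if excluded_middle_informative (pi n = pi 0) then s
    else rcons (lift_cycle m) (pi n, Defs.fcycle)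
  else s.

Lemma lift_cycle_pr n : pr (lift_cycle n) = pi n.
Proof.
case: n => //= n; case: eqP => _; first exact: pr_rcons.
by case: excluded_middle_informative => [e | ne] /=; rewrite ?pr_rcons // e pi0.
Qed.

Lemma lift_cycle_shape n : lift_cycle n = s \/ init_cycle_state (lift_cycle n) s.
Proof.
elim: n => [|n IH] /=; first by left.
case: eqP => [_ | sz].
  by right; exists (pi n.+1), [::]; rewrite cats1.
have [v [r [ev cr]]] : init_cycle_state (lift_cycle n) s.
  by case: IH => // e; rewrite e in sz.
case: excluded_middle_informative => e; [by left | right].
exists v, (rcons r (pi n.+1, Defs.fcycle)).
by rewrite ev rcons_cat rcons_cons /all_cycle all_rcons.
Qed.

Lemma lift_cycle_Rb : is_path pi -> forall n, Rb (lift_cycle n) (lift_cycle n.+1).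
Proof.
move=> p n; have shape := lift_cycle_shape n.
exists (pi n.+1); split; first by rewrite lift_cycle_pr; apply: p.
rewrite /=; case: eqP => sz.
  by left; case: shape => [-> // | /init_cycle_state_size]; rewrite sz eqxx.
have ics : init_cycle_state (lift_cycle n) s by case: shape => // e; rewrite e in sz.
case: excluded_middle_informative => e /=; right; [right | left]; exists s.
  by split=> //; split; rewrite ?e.
by split=> //; split=> //; rewrite -pi0 => /esym.
Qed.

Lemma lift_cycle_returns : is_cycle pi -> forall i, exists j, i < j /\ lift_cycle j = s.
Proof.
case=> _ c i; have [[|k] [ik ek]] := c i.+1 => //.
have shape := lift_cycle_shape k.
case: (boolP (size (lift_cycle k) == size s)) => sz.
  by exists k; split => //; case: shape => // /init_cycle_state_size; rewrite sz.
exists k.+1; split; first exact: ltnW.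
by rewrite /= (negbTE sz); case: excluded_middle_informative.
Qed.

End CycleLift.

Lemma unwinding_cycle_lift (a : kW (unwinding K)) (pi : nat -> kW K) :
  is_cycle pi -> pi 0 = pr (proj1_sig a) ->
  exists pi1 : nat -> kW (unwinding K), [/\ is_cycle pi1, pi1 0 = a &
    forall n, pr (proj1_sig (pi1 n)) = pi n].
Proof.
move=> c pi0; have p := proj1 c.
have reach_n n : reach (lift_cycle pi (proj1_sig a) n).
  elim: n => [|n IH]; first exact: proj2_sig.
  exact: reach_step IH (lift_cycle_Rb pi0 p n).
exists (fun n => exist _ _ (reach_n n)); split=> [| | n].
- split=> [n | i]; first exact: lift_cycle_Rb.
  have [j [ij e]] := lift_cycle_returns (proj1_sig a) c i.
  by exists j; split => //; apply: unwinding_world_eq.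
- exact: unwinding_world_eq.
- exact: lift_cycle_pr.
Qed.

Lemma pr_cycle_bisim :
  cycle_bisim (K1 := unwinding K) (K2 := K) (fun a w => pr (proj1_sig a) = w).
Proof.
split=> // a _ <-; split => //.
- by move=> b Rab; exists (pr (proj1_sig b)); split => //; apply: Rb_pr.
- move=> v Rv; exists (exist _ _ (reach_step (proj2_sig a) (Rb_new Rv))).
  by split; [apply: Rb_new | rewrite /= pr_rcons].
- move=> pi c e; exists (fun n => pr (proj1_sig (pi n))).
  by split; [apply: pr_is_cycle | rewrite e].
- move=> pi c e; have [pi1 [c1 e1 pr1]] := unwinding_cycle_lift c e.
  by exists pi1.
Qed.

End Unwinding.

Theorem mainTheorem3 (AP : finType) (K : kripke AP) :
  countable_worlds K -> left_total K ->
  cycle_bisim (K1 := unwinding K) (K2 := K)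
    (fun (a : kW (unwinding K)) (w : kW K) => pr (proj1_sig a) = w) /\
  (forall phi : sform AP, models K phi <-> models (unwinding K) phi).
Proof.
move=> _ _; split=> [|phi]; first exact: pr_cycle_bisim.
by rewrite (cycle_bisim_models (pr_cycle_bisim K)).
Qed.
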